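(* Let $f:\mathcal D_n^+\to\mathcal D_n^+$ be weakly monotonic (non-decreasing or non-increasing for the entrywise order on diagonal matrices) and bounded from below and above, i.e. there are $0<\delta_m\le\delta_M$ with $\delta_mI_n\le f(\Delta)\le\delta_MI_n$ for all $\Delta$. Suppose $f$ is stable and satisfies $d_s(f(\Delta),f(\Delta'))<d_s(\Delta,\Delta')$ for all $\Delta\ne\Delta'$ in $\mathcal D_n^+$. Then there exists a unique $\Delta^*\in\mathcal D_n^+$ with $\Delta^*=f(\Delta^* )$.
   Context: $\mathcal D_n^+$ is the set of $n\times n$ diagonal matrices with positive diagonal entries. $d_s(\Delta,\Delta')=\max_i\frac{|\Delta_i-\Delta'_i|}{\sqrt{\Delta_i\Delta'_i}}$ (stable semi-metric). A map $f:\mathcal D_n^+\to\mathcal D_n^+$ is stable if $d_s(f(\Delta),f(\Delta'))\le d_s(\Delta,\Delta')$ for all $\Delta,\Delta'$. *)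

From HB Require Import structures.
From mathcomp Require Import all_boot all_order all_algebra.
From mathcomp Require Import reals.
Set Implicit Arguments. Unset Strict Implicit. Unset Printing Implicit Defensive.
Import Order.TTheory GRing.Theory Num.Theory.
Local Open Scope ring_scope.

Definition Dpos (R : realType) (n : nat) (D : 'M[R]_n) : Prop :=
  is_diag_mx D /\ forall i : 'I_n, 0 < D i i.

(* stable semi-metric d_s(D,D') = max_i |D_i - D'_i| / sqrt(D_i D'_i)
   (for n = 0 the empty max is 0) *)
Definition ds (R : realType) (n : nat) (D D' : 'M[R]_n) : R :=
  \big[Num.max/0]_(i < n) (`|D i i - D' i i| / Num.sqrt (D i i * D' i i)).

Definition dle (R : realType) (n : nat) (D D' : 'M[R]_n) : Prop :=
  forall i : 'I_n, D i i <= D' i i.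

Definition weakly_monotonic (R : realType) (n : nat) (f : 'M[R]_n -> 'M[R]_n) : Prop :=
  (forall D D', Dpos D -> Dpos D' -> dle D D' -> dle (f D) (f D')) \/
  (forall D D', Dpos D -> Dpos D' -> dle D D' -> dle (f D') (f D)).

Definition stable (R : realType) (n : nat) (f : 'M[R]_n -> 'M[R]_n) : Prop :=
  forall D D', Dpos D -> Dpos D' -> ds (f D) (f D') <= ds D D'.

(* Existence is Knaster-Tarski in the box [dm, dM]^n: for a non-decreasing map,
   the entrywise supremum of its post-fixed points is a fixed point.  A
   non-increasing f is handled through the non-decreasing f \o f, whose fixed
   point must already be fixed by f, since a strict contraction of d_s has no
   2-cycle.  The strict contraction also forbids two distinct fixed points. *)

From HB Require Import structures.
From mathcomp Require Import all_boot all_order all_algebra.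
From mathcomp Require Import reals classical_sets.

Set Implicit Arguments.
Unset Strict Implicit.
Unset Printing Implicit Defensive.
Import Order.TTheory GRing.Theory Num.Theory.
Local Open Scope ring_scope.

Section DiagonalMatrices.
Variables (R : realType) (n : nat).
Implicit Types (A B : 'M[R]_n) (c : R).

Lemma is_diag_mx_eq A B : is_diag_mx A -> is_diag_mx B ->
  (forall i, A i i = B i i) -> A = B.
Proof.
move=> /is_diag_mxP dA /is_diag_mxP dB eAB; apply/matrixP => i j.
by have [->|nij] := eqVneq i j; [exact: eAB | rewrite dA ?dB].
Qed.

Lemma scalar_mx_diag c (i : 'I_n) : (c%:M : 'M[R]_n) i i = c.
Proof. by rewrite mxE eqxx mulr1n. Qed.

Lemma Dpos_scalar c : 0 < c -> Dpos (c%:M : 'M[R]_n).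
Proof.
by move=> c0; split=> [|i]; rewrite ?scalar_mx_is_diag ?scalar_mx_diag.
Qed.

Lemma dsC A B : ds A B = ds B A.
Proof. by apply: eq_bigr => i _; rewrite distrC [A i i * _]mulrC. Qed.

End DiagonalMatrices.

Section KnasterTarski.
Variables (R : realType) (n : nat) (h : 'M[R]_n -> 'M[R]_n).
Hypothesis h_pos : forall D, Dpos D -> Dpos (h D).
Hypothesis h_mono :
  forall D D', Dpos D -> Dpos D' -> dle D D' -> dle (h D) (h D').
Variables (D0 U : 'M[R]_n).
Hypotheses (D0_pos : Dpos D0) (D0_post : dle D0 (h D0)).
Hypothesis h_ub : forall D, Dpos D -> dle (h D) U.

Let post_diag i : set R := [set D i i | D in [set D | Dpos D /\ dle D (h D)]].

Let post_diag_sup i : has_sup (post_diag i).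
Proof.
split; first by exists (D0 i i), D0.
by exists (U i i) => _ [D [DP Dpost] <-]; apply: le_trans (Dpost i) (h_ub DP i).
Qed.

Let Dsup : 'M[R]_n := diag_mx (\row_i sup (post_diag i)).

Let Dsup_diag i : Dsup i i = sup (post_diag i).
Proof. by rewrite !mxE eqxx mulr1n. Qed.

Let post_le_Dsup D : Dpos D -> dle D (h D) -> dle D Dsup.
Proof.
by move=> DP Dpost i; rewrite Dsup_diag; apply: sup_upper_bound => //; exists D.
Qed.

Let Dsup_pos : Dpos Dsup.
Proof.
split=> [|i]; first exact: diag_mx_is_diag.
by apply: lt_le_trans (D0_pos.2 i) (post_le_Dsup D0_pos D0_post i).
Qed.

Let Dsup_post : dle Dsup (h Dsup).
Proof.
move=> i; rewrite Dsup_diag; apply: ge_sup; first by exists (D0 i i), D0.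
move=> _ [D [DP Dpost] <-].
exact: le_trans (Dpost i) (h_mono DP Dsup_pos (post_le_Dsup DP Dpost) i).
Qed.

Let Dsup_pre : dle (h Dsup) Dsup.
Proof.
apply: post_le_Dsup; first exact: h_pos.
exact: h_mono (h_pos Dsup_pos) Dsup_post.
Qed.

Lemma monotone_exists_fixpoint : exists D, Dpos D /\ D = h D.
Proof.
exists Dsup; split=> //.
apply: is_diag_mx_eq; [exact: Dsup_pos.1 | exact: (h_pos Dsup_pos).1 |].
by move=> i; apply/eqP; rewrite eq_le Dsup_post Dsup_pre.
Qed.

End KnasterTarski.

Lemma weakly_monotonic_exists_2periodic (R : realType) (n : nat)
    (f : 'M[R]_n -> 'M[R]_n) (dm dM : R) :
  (forall D, Dpos D -> Dpos (f D)) -> weakly_monotonic f -> 0 < dm ->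
  (forall D, Dpos D -> dle (dm%:M) (f D) /\ dle (f D) (dM%:M)) ->
  exists D, Dpos D /\ D = f (f D).
Proof.
move=> f_pos f_mono dm0 f_bd.
have dmP : Dpos (dm%:M : 'M[R]_n) := Dpos_scalar n dm0.
have ub D : Dpos D -> dle (f D) (dM%:M) by case/f_bd.
case: f_mono => [f_incr | f_decr].
- have [D [DP DE]] := monotone_exists_fixpoint
    f_pos f_incr dmP (f_bd _ dmP).1 ub.
  by exists D; rewrite -!DE.
- have ff_pos D : Dpos D -> Dpos (f (f D)) by move=> /f_pos /f_pos.
  have ff_incr D D' : Dpos D -> Dpos D' -> dle D D' -> dle (f (f D)) (f (f D')).
    move=> DP D'P leDD'.
    exact: f_decr (f_pos _ D'P) (f_pos _ DP) (f_decr _ _ DP D'P leDD').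
  have [D [DP DE]] := monotone_exists_fixpoint (h := f \o f)
    ff_pos ff_incr dmP (f_bd _ (f_pos _ dmP)).1 (fun D DP => ub _ (f_pos _ DP)).
  by exists D.
Qed.

Section StrictContraction.
Variables (R : realType) (n : nat) (f : 'M[R]_n -> 'M[R]_n).
Hypothesis f_pos : forall D, Dpos D -> Dpos (f D).
Hypothesis f_contr :
  forall D D', Dpos D -> Dpos D' -> D <> D' -> ds (f D) (f D') < ds D D'.

Lemma strict_contraction_2periodic_fixed D : Dpos D -> D = f (f D) -> D = f D.
Proof.
move=> DP DE; have [//|/eqP neq] := eqVneq D (f D).
by have := f_contr DP (f_pos DP) neq; rewrite -DE dsC ltxx.
Qed.

Lemma strict_contraction_fixpoint_unique D D' : Dpos D -> Dpos D' ->
  D = f D -> D' = f D' -> D = D'.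
Proof.
move=> DP D'P DE D'E; have [//|/eqP neq] := eqVneq D D'.
by have := f_contr DP D'P neq; rewrite -DE -D'E ltxx.
Qed.

End StrictContraction.

Theorem theorem3 (R : realType) (n : nat) (f : 'M[R]_n -> 'M[R]_n)
  (dm dM : R) :
  (forall D, Dpos D -> Dpos (f D)) ->
  weakly_monotonic f ->
  0 < dm -> dm <= dM ->
  (forall D, Dpos D -> dle (dm%:M) (f D) /\ dle (f D) (dM%:M)) ->
  stable f ->
  (forall D D', Dpos D -> Dpos D' -> D <> D' -> ds (f D) (f D') < ds D D') ->
  exists! D, Dpos D /\ D = f D.
Proof.
(* dm <= dM and stability are implied by the other hypotheses. *)
move=> f_pos f_mono dm0 _ f_bd _ f_contr.
have [D [DP DE]] := weakly_monotonic_exists_2periodic f_pos f_mono dm0 f_bd.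
have Dfix := strict_contraction_2periodic_fixed f_pos f_contr DP DE.
exists D; split=> // D' [D'P D'E].
exact: (strict_contraction_fixpoint_unique f_contr DP D'P Dfix D'E).
Qed.
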